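(* Consider the BC-phase training model described in the context, with relay training length $L_R$ and total MSE $e_1(\mathbf S_R)+e_2(\mathbf S_R)$. (i) If $L_R\ge M$, then for every $\varepsilon>0$ there exists $\mathbf S_R\in\mathbb C^{M\times L_R}$ (with no bound on $\mathrm{Tr}(\mathbf S_R\mathbf S_R^H)$) such that $e_1(\mathbf S_R)+e_2(\mathbf S_R)<\varepsilon$; i.e. an arbitrarily small MSE can be achieved with sufficiently large relay power when $L_R=M$. (ii) If $L_R<M$, then for every $\mathbf S_R\in\mathbb C^{M\times L_R}$ (even with infinite relay power) $$e_1(\mathbf S_R)+e_2(\mathbf S_R)\ge\sum_{m=L_R+1}^{M}\sigma_{t,G,m}\Big(\sum_{n=1}^{N_1}\sigma_{r,G_1,n}+\sum_{n=1}^{N_2}\sigma_{r,G_2,n}\Big),$$ where $\sigma_{t,G,1}\ge\dots\ge\sigma_{t,G,M}$ are the eigenvalues of $\mathbf Z_{t,G}$ in decreasing order and $\sigma_{r,G_i,n}$ are the eigenvalues of $\mathbf Z_{r,G_i}$. (iii) Suppose $\mathbf K_{q,i}=q_i\mathbf I_{L_R}$ with $q_i>0$ for $i=1,2$, let $\tau_R>0$, and let $\mathbf S_R^{\rm opt}$ be an optimal solution of $\min_{\mathbf S_R} e_1(\mathbf S_R)+e_2(\mathbf S_R)$ subject to $\mathrm{Tr}(\mathbf S_R\mathbf S_R^H)\le\tau_R$, with $\mathrm{Rank}(\mathbf S_R^{\rm opt})=r$. Then there exists $\tilde{\mathbf S}_R\in\mathbb C^{M\times r}$ with $\mathrm{Tr}(\tilde{\mathbf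 S}_R\tilde{\mathbf S}_R^H)=\mathrm{Tr}(\mathbf S_R^{\rm opt}\mathbf S_R^{{\rm opt}H})$ whose total MSE in the same model with training length $r$ (temporal disturbance covariances $q_i\mathbf I_r$) equals that of $\mathbf S_R^{\rm opt}$; i.e. the training length can be reduced to $L_R=r$.
   Context: BC phase of a MIMO two-way relay system: relay with $M$ antennas broadcasts training $\mathbf S_R\in\mathbb C^{M\times L_R}$ to sources with $N_1,N_2$ antennas. Let $\mathbf Z_{t,G}\in\mathbb C^{M\times M}$ and $\mathbf Z_{r,G_i}\in\mathbb C^{N_i\times N_i}$ be Hermitian positive definite with $\mathbf Z_{t,G}=\mathbf C_{t,G}\mathbf C_{t,G}^H$, $\mathbf Z_{r,G_i}=\mathbf C_{r,G_i}\mathbf C_{r,G_i}^H$ (square invertible factors). Channels $\mathbf G_i=\mathbf C_{r,G_i}\mathbf W_{G_i}\mathbf C_{t,G}^T\in\mathbb C^{N_i\times M}$ with $\mathbf W_{G_i}$ having i.i.d. $\mathcal{CN}(0,1)$ entries. Source $i$ receives $\mathbf Y_i=\mathbf G_i\mathbf S_R+\mathbf N_i$, $\mathrm{vec}(\mathbf N_i)\sim\mathcal{CN}(\mathbf 0,\mathbf K_i)$, $\mathbf K_i=\mathbf K_{q,i}\otimes\mathbf K_{r,i}$ with $\mathbf K_{q,i}\in\mathbb C^{L_R\times L_R}$, $\mathbf K_{r,i}\in\mathbb C^{N_i\times N_i}$ Hermitian positive definite, $\mathbf K_{r,i}$ sharing eigenvectors with $\mathbf Z_{r,G_i}$. The LMMSE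 estimation error of $\mathrm{vec}(\mathbf G_i)$ is $e_i(\mathbf S_R)=\mathrm{Tr}\big[\mathbf C_{0,G_i}(\mathbf I+\mathbf F_i^H\mathbf K_i^{-1}\mathbf F_i)^{-1}\big]$, $\mathbf F_i=\mathbf S_R^T\mathbf C_{t,G}\otimes\mathbf C_{r,G_i}$, $\mathbf C_{0,G_i}=\mathbf C_{t,G}^H\mathbf C_{t,G}\otimes\mathbf C_{r,G_i}^H\mathbf C_{r,G_i}$. *)

From HB Require Import structures.
From mathcomp Require Import all_boot all_order all_algebra.
From mathcomp Require Import complex mxtens.
Set Implicit Arguments. Unset Strict Implicit. Unset Printing Implicit Defensive.
Import Order.TTheory GRing.Theory Num.Theory.
Local Open Scope ring_scope.

Definition hadj (C : numClosedFieldType) m n (A : 'M[C]_(m, n)) : 'M[C]_(n, m) :=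
  (map_mx Num.conj A)^T.

Definition herm_pd (C : numClosedFieldType) n (A : 'M[C]_n) : Prop :=
  hadj A = A /\ forall x : 'cV[C]_n, x != 0 -> 0 < (hadj x *m A *m x) 0 0.

Definition share_eigvecs (C : numClosedFieldType) n (K Z : 'M[C]_n) : Prop :=
  exists U : 'M[C]_n, hadj U *m U = 1%:M /\
    is_diag_mx (hadj U *m K *m U) /\ is_diag_mx (hadj U *m Z *m U).

Definition eigvals_of (C : numClosedFieldType) n (Z : 'M[C]_n) (s : 'I_n -> C) : Prop :=
  char_poly Z = \prod_(i < n) ('X - (s i)%:P).

Definition mse (C : numClosedFieldType) (M N L : nat)
    (Ct : 'M[C]_M) (Cr : 'M[C]_N) (Kq : 'M[C]_L) (Kr : 'M[C]_N)
    (S : 'M[C]_(M, L)) : C :=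
  let F : 'M[C]_(L * N, M * N) := tensmx (S^T *m Ct) Cr in
  let K : 'M[C]_(L * N) := tensmx Kq Kr in
  let C0 : 'M[C]_(M * N) := tensmx (hadj Ct *m Ct) (hadj Cr *m Cr) in
  \tr (C0 *m invmx (1%:M + hadj F *m invmx K *m F)).

Definition total_mse (C : numClosedFieldType) (M N1 N2 L : nat)
    (Ct : 'M[C]_M) (Cr1 : 'M[C]_N1) (Cr2 : 'M[C]_N2)
    (Kq1 Kq2 : 'M[C]_L) (Kr1 : 'M[C]_N1) (Kr2 : 'M[C]_N2)
    (S : 'M[C]_(M, L)) : C :=
  mse Ct Cr1 Kq1 Kr1 S + mse Ct Cr2 Kq2 Kr2 S.

(* (i) For S = c (E Ct^-1)^T, with E the partial identity, each error matrix
   is (I + c^2 G)^-1 for a fixed invertible G, so the MSE is O(1/c^2).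
   (ii) When L < M the matrix S^T Ct has a kernel of dimension at least
   M - L.  If P is the orthogonal projection onto it, P (x) I is a Hermitian
   projection fixed by I + F^H K^-1 F, hence bounded above by its inverse;
   this gives e_i >= tr(Ct^H Ct P) tr(Zr_i), and tr(Ct^H Ct P) is at least
   the sum of the M - L smallest eigenvalues of Zt (Ky Fan).
   (iii) For Kq = q I the MSE depends on S only through S S^H, and a rank r
   matrix S has the same Gram matrix S S^H as some M x r matrix. *)
From HB Require Import structures.
From mathcomp Require Import all_boot all_order all_algebra.
From mathcomp Require Import complex mxtens.
From mathcomp Require Import sesquilinear spectral perm.
From mathcomp Require Import ring.
Set Implicit Arguments. Unset Strict Implicit. Unset Printing Implicit Defensive.
Import Order.TTheory GRing.Theory Num.Theory.
Local Open Scope ring_scope.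

Section Adjoint.
Variable C : numClosedFieldType.

Lemma hadjK m n (A : 'M[C]_(m, n)) : hadj (hadj A) = A.
Proof. by rewrite /hadj -map_trmx trmxK -map_mx_comp (map_mx_id (@conjCK _)). Qed.

Lemma hadjM m n p (A : 'M[C]_(m, n)) (B : 'M_(n, p)) :
  hadj (A *m B) = hadj B *m hadj A.
Proof. by rewrite /hadj map_mxM trmx_mul. Qed.

Lemma hadjD m n (A B : 'M[C]_(m, n)) : hadj (A + B) = hadj A + hadj B.
Proof. by rewrite /hadj map_mxD linearD. Qed.

Lemma hadjB m n (A B : 'M[C]_(m, n)) : hadj (A - B) = hadj A - hadj B.
Proof. by rewrite /hadj map_mxB linearB. Qed.

Lemma hadjZ m n c (A : 'M[C]_(m, n)) : hadj (c *: A) = c^* *: hadj A.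
Proof. by rewrite /hadj map_mxZ linearZ. Qed.

Lemma hadj1 n : hadj (1%:M : 'M[C]_n) = 1%:M.
Proof. by rewrite /hadj map_mx1 trmx1. Qed.

Lemma hadjE m n (A : 'M[C]_(m, n)) i j : hadj A i j = (A j i)^*.
Proof. by rewrite !mxE. Qed.

Lemma hadj_invmx n (A : 'M[C]_n) : hadj (invmx A) = invmx (hadj A).
Proof. by rewrite /hadj map_invmx trmx_inv. Qed.

Lemma unitmx_hadj n (A : 'M[C]_n) : (hadj A \in unitmx) = (A \in unitmx).
Proof. by rewrite /hadj unitmx_tr map_unitmx. Qed.

Lemma hadj_tensmx m n p q (A : 'M[C]_(m, n)) (B : 'M[C]_(p, q)) :
  hadj (A *t B) = hadj A *t hadj B.
Proof. by rewrite /hadj map_mxT trmx_tens. Qed.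

Lemma hadj_trmx m n (A : 'M[C]_(m, n)) : hadj A^T = (hadj A)^T.
Proof. by rewrite /hadj -map_trmx. Qed.

Lemma hadj_map_trmx m n (A : 'M[C]_(m, n)) : hadj A = map_mx Num.conj A^T.
Proof. by rewrite /hadj map_trmx. Qed.

Lemma mulmx_hadj_unitary m n (U : 'M[C]_(m, n)) :
  U \is unitarymx -> U *m hadj U = 1%:M.
Proof. by move=> /unitarymxP; rewrite hadj_map_trmx. Qed.

Lemma herm_invmx n (A : 'M[C]_n) : hadj A = A -> hadj (invmx A) = invmx A.
Proof. by move=> hA; rewrite hadj_invmx hA. Qed.

End Adjoint.

Section QuadraticForms.
Variable C : numClosedFieldType.

Definition qform n (A : 'M[C]_n) (x : 'cV[C]_n) : C := (hadj x *m A *m x) 0 0.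
Definition psdmx n (A : 'M[C]_n) := forall x, 0 <= qform A x.
Definition pdmx n (A : 'M[C]_n) := forall x, x != 0 -> 0 < qform A x.

Lemma qformD n (A B : 'M[C]_n) x : qform (A + B) x = qform A x + qform B x.
Proof. by rewrite /qform mulmxDr mulmxDl mxE. Qed.

Lemma qformZ n (A : 'M[C]_n) c x : qform (c *: A) x = c * qform A x.
Proof. by rewrite /qform -scalemxAr -scalemxAl mxE. Qed.

Lemma qform_conj n p (A : 'M[C]_n) (B : 'M[C]_(n, p)) x :
  qform (hadj B *m A *m B) x = qform A (B *m x).
Proof. by rewrite /qform hadjM !mulmxA. Qed.

Lemma qform1E n (x : 'cV[C]_n) : qform 1%:M x = \sum_i x i 0 * (x i 0)^*.
Proof. by rewrite /qform mulmx1 mxE; apply: eq_bigr => i _; rewrite hadjE mulrC. Qed.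

Lemma qform1_ge0 n (x : 'cV[C]_n) : 0 <= qform 1%:M x.
Proof. by rewrite qform1E sumr_ge0 // => i _; rewrite mul_conjC_ge0. Qed.

Lemma qform1_gt0 n (x : 'cV[C]_n) : x != 0 -> 0 < qform 1%:M x.
Proof.
move=> xn0; have /existsP[i xi] : [exists i, x i 0 != 0].
  apply: contraNT xn0; rewrite negb_exists => /forallP xN.
  by apply/eqP/matrixP => i j; rewrite ord1 mxE; apply/eqP; have := xN i; rewrite negbK.
rewrite qform1E (bigD1 i) //= ltr_wpDr ?mul_conjC_gt0 // sumr_ge0 // => j _.
exact: mul_conjC_ge0.
Qed.

Lemma psdmx1 n : psdmx (1%:M : 'M[C]_n).
Proof. exact: qform1_ge0. Qed.

Lemma psdmxD n (A B : 'M[C]_n) : psdmx A -> psdmx B -> psdmx (A + B).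
Proof. by move=> hA hB x; rewrite qformD addr_ge0. Qed.

Lemma psdmx_conj n p (A : 'M[C]_n) (B : 'M[C]_(n, p)) :
  psdmx A -> psdmx (hadj B *m A *m B).
Proof. by move=> hA x; rewrite qform_conj. Qed.

Lemma psdmx_gram n p (B : 'M[C]_(n, p)) : psdmx (hadj B *m B).
Proof. by move=> x; rewrite -[hadj B]mulmx1 qform_conj qform1_ge0. Qed.

Lemma hadj_conj_diagE n p (A : 'M[C]_n) (Y : 'M[C]_(n, p)) i :
  (hadj Y *m A *m Y) i i = qform A (col i Y).
Proof.
rewrite /qform !mxE; apply: eq_bigr => k _; rewrite !mxE; congr (_ * _).
by apply: eq_bigr => l _; rewrite !mxE.
Qed.

Lemma mxtrace_gram_psd_ge0 m n (D : 'M[C]_(m, n)) (X : 'M[C]_n) :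
  psdmx X -> 0 <= \tr (hadj D *m D *m X).
Proof.
move=> hX; rewrite -mulmxA mxtrace_mulC -{1}[D]hadjK.
by rewrite /mxtrace sumr_ge0 // => i _; rewrite hadj_conj_diagE.
Qed.

Lemma pdmx_unit n (A : 'M[C]_n) : pdmx A -> A \in unitmx.
Proof.
move=> hA; rewrite -unitmx_tr -row_free_unit -kermx_eq0.
apply: contraT => /rowV0Pn [u uK un0].
have Au : A *m u^T = 0.
  by apply: trmx_inj; rewrite trmx_mul trmxK trmx0; apply/sub_kermxP.
have := hA u^T; rewrite /qform -mulmxA Au mulmx0 mxE ltxx.
by rewrite trmx_eq0 un0 => /(_ isT).
Qed.

Lemma psdmx_inv n (A : 'M[C]_n) :
  A \in unitmx -> hadj A = A -> psdmx A -> psdmx (invmx A).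
Proof.
move=> uA hA pA x.
have -> : qform (invmx A) x = qform A (invmx A *m x).
  by rewrite /qform hadjM herm_invmx // !mulmxA mulmxKV.
exact: pA.
Qed.

Lemma herm_pd_unit n (A : 'M[C]_n) : herm_pd A -> A \in unitmx.
Proof. by case=> _; exact: pdmx_unit. Qed.

End QuadraticForms.

Section Tensor.
Variable C : numClosedFieldType.

Lemma tensmx11 m n : (1%:M : 'M[C]_m) *t (1%:M : 'M[C]_n) = 1%:M.
Proof.
apply/matrixP => i j.
case: (mxtens_indexP i) => i1 i2; case: (mxtens_indexP j) => j1 j2.
rewrite tensmxE !mxE (inj_eq (can_inj (@mxtens_indexK m n))) xpair_eqE.
by rewrite -natrM mulnb.
Qed.

Lemma mxtrace_tens m n (A : 'M[C]_m) (B : 'M[C]_n) : \tr (A *t B) = \tr A * \tr B.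
Proof. by rewrite /mxtrace mulr_sum; apply: eq_bigr => k _; rewrite !mxE. Qed.

Lemma tensmxZl m n p q c (A : 'M[C]_(m, n)) (B : 'M[C]_(p, q)) :
  (c *: A) *t B = c *: (A *t B).
Proof. by apply/matrixP => i j; rewrite !mxE mulrA. Qed.

Lemma invmx_left n (A X : 'M[C]_n) : X *m A = 1%:M -> invmx A = X.
Proof.
move=> XA; have [_ uA] := mulmx1_unit XA.
by rewrite -[invmx A]mul1mx -XA mulmxK.
Qed.

Lemma invmxM n (A B : 'M[C]_n) : A \in unitmx -> B \in unitmx ->
  invmx (A *m B) = invmx B *m invmx A.
Proof.
move=> uA uB; apply: invmx_left.
by rewrite mulmxA -[invmx B *m _ *m A]mulmxA mulVmx // mulmx1 mulVmx.
Qed.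

Lemma tensmx_inv m n (A : 'M[C]_m) (B : 'M[C]_n) :
  A \in unitmx -> B \in unitmx ->
  A *t B \in unitmx /\ invmx (A *t B) = invmx A *t invmx B.
Proof.
move=> uA uB.
have BAinv : (invmx A *t invmx B) *m (A *t B) = 1%:M.
  by rewrite tensmx_mul !mulVmx // tensmx11.
by split; [case: (mulmx1_unit BAinv) | exact: invmx_left].
Qed.

End Tensor.

Section Spectral.
Variable C : numClosedFieldType.

Lemma herm_spectral n (P : 'M[C]_n) : hadj P = P ->
  let U := spectralmx P in
  [/\ U *m hadj U = 1%:M, hadj U *m U = 1%:M &
      P = hadj U *m diag_mx (spectral_diag P) *m U].
Proof.
move=> hP U.
have UU : U *m hadj U = 1%:M by exact/mulmx_hadj_unitary/spectral_unitarymx.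
split => //; first exact: mulmx1C.
have /orthomx_spectralP {1}-> : P \is normalmx.
  by apply/normalmxP; rewrite -hadj_map_trmx hP.
by rewrite invmx_unitary ?spectral_unitarymx // -hadj_map_trmx.
Qed.

Lemma spectral_diag_qform n (P U : 'M[C]_n) (d : 'rV[C]_n) i :
  U *m hadj U = 1%:M -> P = hadj U *m diag_mx d *m U ->
  d 0 i = qform P (col i (hadj U)) /\ col i (hadj U) != 0.
Proof.
move=> UU eP; split.
  rewrite -hadj_conj_diagE hadjK eP !mulmxA UU mul1mx -mulmxA UU mulmx1.
  by rewrite mxE eqxx mulr1n.
apply/eqP => col0.
have := hadj_conj_diagE 1%:M (hadj U) i.
rewrite col0 hadjK mulmx1 UU /qform mulmx0 !mxE eqxx /=.
by move/eqP; rewrite oner_eq0.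
Qed.

Lemma herm_pd_gram n (P : 'M[C]_n) : herm_pd P ->
  exists2 B : 'M[C]_n, B \in unitmx & P = hadj B *m B.
Proof.
case=> hP pP; have [UU UtU eP] := herm_spectral hP.
set U := spectralmx P in UU UtU eP; set d := spectral_diag P in eP.
have d_gt0 i : 0 < d 0 i.
  by have [-> col_neq0] := spectral_diag_qform i UU eP; exact: pP.
pose s : 'rV[C]_n := \row_i sqrtC (d 0 i).
have s_gt0 i : 0 < s 0 i by rewrite mxE sqrtC_gt0.
have hs : hadj (diag_mx s) = diag_mx s.
  rewrite /hadj map_diag_mx tr_diag_mx; congr diag_mx.
  apply/matrixP => i j; rewrite ord1 !mxE.
  by apply: geC0_conj; rewrite sqrtC_ge0 ltW.
exists (diag_mx s *m U).
  rewrite unitmx_mul unitmxE det_diag unitfE prodf_seq_neq0.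
  rewrite (mulmx1_unit UU).1 andbT.
  by apply/allP => i _; rewrite gt_eqF.
rewrite {1}eP hadjM hs -!mulmxA; congr (_ *m _); rewrite !mulmxA; congr (_ *m _).
rewrite mul_diag_mx; apply/matrixP => i j; rewrite !mxE.
by rewrite mulrnAr -expr2 sqrtCK.
Qed.

Lemma herm_pd_tens_inv_gram m n (Kq : 'M[C]_m) (Kr : 'M[C]_n) :
  herm_pd Kq -> herm_pd Kr ->
  exists2 W : 'M[C]_(m * n), W \in unitmx & invmx (Kq *t Kr) = hadj W *m W.
Proof.
move=> /herm_pd_gram [Bq uBq ->] /herm_pd_gram [Br uBr ->].
have [uB _] := tensmx_inv uBq uBr.
set B := Bq *t Br in uB.
rewrite -tensmx_mul -hadj_tensmx -/B.
exists (hadj (invmx B)); first by rewrite unitmx_hadj unitmx_inv.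
by rewrite hadjK invmxM ?unitmx_hadj // hadj_invmx.
Qed.

Lemma char_poly_conj n (Q A P : 'M[C]_n) :
  Q *m P = 1%:M -> char_poly (Q *m A *m P) = char_poly A.
Proof.
move=> QP; rewrite /char_poly /char_poly_mx.
set Qp := map_mx polyC Q; set Pp := map_mx polyC P.
have QPp : Qp *m Pp = 1%:M by rewrite -map_mxM QP map_mx1.
have -> : ('X%:M - map_mx polyC (Q *m A *m P) : 'M_n) =
          Qp *m ('X%:M - map_mx polyC A) *m Pp.
  rewrite mulmxBr mulmxBl !map_mxM; congr (_ - _).
  by rewrite mul_mx_scalar -scalemxAl QPp scalemx1.
rewrite !det_mulmx mulrC mulrA -det_mulmx mulmxE.
by rewrite -mulmxE [Pp *m Qp]mulmx1C // det1 mul1r.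
Qed.

Lemma prod_XsubC_enum n (s : 'I_n -> C) :
  \prod_(i < n) ('X - (s i)%:P) =
  \prod_(x <- [seq s i | i <- enum 'I_n]) ('X - x%:P).
Proof. by rewrite big_map big_enum. Qed.

Lemma mxtrace_eigvals n (Z : 'M[C]_n) s : eigvals_of Z s -> \tr Z = \sum_i s i.
Proof.
rewrite /eigvals_of; case: n Z s => [|n] Z s cpZ; first by rewrite /mxtrace !big_ord0.
have := @coefPn_prod_XsubC _ [seq s i | i <- enum 'I_n.+1].
rewrite size_map size_enum_ord -prod_XsubC_enum -cpZ char_poly_trace // => /(_ isT).
by move/eqP; rewrite eqr_opp => /eqP ->; rewrite big_map big_enum.
Qed.

Lemma eigvals_perm n (d s : 'I_n -> C) :
  \prod_(i < n) ('X - (d i)%:P) = \prod_(i < n) ('X - (s i)%:P) ->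
  exists sg : 'S_n, forall i, d i = s (sg i).
Proof.
rewrite !prod_XsubC_enum => /prod_XsubC_eq; set t := [tuple s i | i < n].
have -> : [seq s i | i <- enum 'I_n] = t by [].
move=> /tuple_permP [sg dt]; exists sg => i.
have /(congr1 (fun r => tnth r i)) :
    [tuple d i | i < n] = [tuple tnth t (sg i) | i < n] by exact: val_inj.
by rewrite !tnth_map !tnth_ord_tuple.
Qed.

End Spectral.

Section Majorization.
Variable R : numDomainType.

Lemma sum_ord_geq_indicator M L : \sum_(m < M) (((L <= m)%N)%:R : R) = (M - L)%:R.
Proof.
transitivity (\sum_(m < M | (L <= m)%N) (1 : R)).
  by rewrite [RHS]big_mkcond; apply: eq_bigr => m _; case: ifP.
have := @big_geq_mkord R 0 +%R L M xpredT (fun _ => 1).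
by rewrite /= => <-; rewrite sumr_const_nat.
Qed.

(* With c := st L and b the indicator of {m >= L}, the difference of the two
   sides is \sum_m (st m - c) (p m - b m) + c (k - (M - L)), and every term of
   the sum is nonnegative because st is nonincreasing. *)
Lemma sum_tail_le_weighted M L k (st p : 'I_M -> R) (hLM : (L < M)%N) :
  (M - L <= k)%N -> (forall i j : 'I_M, (i <= j)%N -> st j <= st i) ->
  0 <= st (Ordinal hLM) -> (forall i, 0 <= p i) -> (forall i, p i <= 1) ->
  \sum_i p i = k%:R ->
  \sum_(m < M | (L <= m)%N) st m <= \sum_m st m * p m.
Proof.
move=> hk st_dec c_ge0 p_ge0 p_le1 sum_p.
set c := st (Ordinal hLM) in c_ge0 *.
pose b (m : 'I_M) : R := ((L <= m)%N)%:R.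
have -> : \sum_(m < M | (L <= m)%N) st m = \sum_m st m * b m.
  rewrite big_mkcond /=; apply: eq_bigr => m _; rewrite /b.
  by case: ifP => _; rewrite ?mulr1 ?mulr0.
rewrite -subr_ge0.
have -> : \sum_m st m * p m - \sum_m st m * b m =
          \sum_m ((st m - c) * (p m - b m)) + c * (\sum_m p m - \sum_m b m).
  by rewrite -!sumrB mulr_sumr -big_split /=; apply: eq_bigr => m _; ring.
rewrite sum_p sum_ord_geq_indicator addr_ge0 //; last first.
  by rewrite mulr_ge0 // subr_ge0 ler_nat.
apply: sumr_ge0 => m _; rewrite /b; case: leqP => hm.
  by apply: mulr_le0; rewrite subr_le0 //; exact: st_dec.
rewrite subr0 mulr_ge0 // subr_ge0; apply: st_dec => /=.
exact: ltnW.
Qed.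

End Majorization.

Section KyFan.
Variable C : numClosedFieldType.

Lemma herm_idem_diag_ge0 n (X : 'M[C]_n) i :
  hadj X = X -> X *m X = X -> 0 <= X i i.
Proof.
move=> hX XX; have -> : X i i = (hadj X *m 1%:M *m X) i i by rewrite mulmx1 hX XX.
by rewrite hadj_conj_diagE qform1_ge0.
Qed.

Lemma herm_idem_diag_le1 n (X : 'M[C]_n) i :
  hadj X = X -> X *m X = X -> X i i <= 1.
Proof.
move=> hX XX; have Xii_ge0 := herm_idem_diag_ge0 i hX XX.
have Xii2 : X i i * X i i <= X i i.
  have {3}-> : X i i = \sum_l X i l * (X i l)^*.
    rewrite -{1}XX mxE; apply: eq_bigr => l _; congr (_ * _).
    by rewrite -{1}hX hadjE.
  rewrite (bigD1 i) //= geC0_conj // lerDl.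
  by apply: sumr_ge0 => l _; exact: mul_conjC_ge0.
have [->|Xii_neq0] := eqVneq (X i i) 0; first exact: ler01.
have Xii_gt0 : 0 < X i i by rewrite lt_def Xii_neq0.
by rewrite -(ler_pM2l Xii_gt0) mulr1.
Qed.

Lemma ky_fan_tail M L k (H : 'M[C]_M) (V : 'M[C]_(M, k)) (st : 'I_M -> C) :
  hadj H = H -> psdmx H -> eigvals_of H st ->
  (forall i j : 'I_M, (i <= j)%N -> st j <= st i) ->
  hadj V *m V = 1%:M -> (L < M)%N -> (M - L <= k)%N ->
  \sum_(m < M | (L <= m)%N) st m <= \tr (H *m (V *m hadj V)).
Proof.
move=> hH pH st_eig st_dec VV hLM hk.
have [UU UtU eH] := herm_spectral hH.
set U := spectralmx H in UU UtU eH; set d := spectral_diag H in eH.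
have d_ge0 i : 0 <= d 0 i.
  by have [-> _] := spectral_diag_qform i UU eH; apply: pH.
have [sg d_st] : exists sg : 'S_M, forall i, d 0 i = st (sg i).
  apply: eigvals_perm; rewrite -st_eig eH char_poly_conj //.
  rewrite char_poly_trig ?diag_mx_is_trig //.
  by apply: eq_bigr => i _; rewrite mxE eqxx mulr1n.
set W := U *m V; set X := W *m hadj W.
have WW : hadj W *m W = 1%:M.
  by rewrite /W hadjM mulmxA -[hadj V *m _ *m U]mulmxA UtU mulmx1.
have hX : hadj X = X by rewrite /X hadjM hadjK.
have XX : X *m X = X by rewrite /X mulmxA -[W *m _ *m W]mulmxA WW mulmx1.
have -> : \tr (H *m (V *m hadj V)) = \sum_i d 0 i * X i i.
  rewrite eH /X /W hadjM -!mulmxA mxtrace_mulC !mulmxA /mxtrace.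
  by apply: eq_bigr => i _; rewrite -!mulmxA mul_diag_mx mxE !mulmxA.
pose p i := X ((sg^-1)%g i) ((sg^-1)%g i).
have -> : \sum_i d 0 i * X i i = \sum_j st j * p j.
  rewrite [RHS](reindex_inj (@perm_inj _ sg)) /=; apply: eq_bigr => i _.
  by rewrite /p permK d_st.
apply: (@sum_tail_le_weighted _ M L k st p hLM) => //.
- by rewrite -[Ordinal hLM](permKV sg) -d_st.
- by move=> i; exact: herm_idem_diag_ge0.
- by move=> i; exact: herm_idem_diag_le1.
- rewrite (reindex_inj (@perm_inj _ sg)) /= -[k%:R](mxtrace1 C) -WW.
  by rewrite -mxtrace_mulC /mxtrace; apply: eq_bigr => i _; rewrite /p permK.
Qed.

End KyFan.

Section TraceBounds.
Variable C : numClosedFieldType.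

(* Q is fixed by A := I + Y^H Y, so A^-1 - Q = (I - Q)^H A^-1 (I - Q) >= 0. *)
Lemma mxtrace_proj_le_inv_gram_shift q p n (Y : 'M[C]_(p, n)) (D : 'M[C]_(q, n))
    (Q : 'M[C]_n) :
  hadj Q = Q -> Q *m Q = Q -> Y *m Q = 0 ->
  \tr (hadj D *m D *m Q) <= \tr (hadj D *m D *m invmx (1%:M + hadj Y *m Y)).
Proof.
move=> hQ QQ YQ; set A := 1%:M + hadj Y *m Y.
have hA : hadj A = A by rewrite /A hadjD hadj1 hadjM hadjK.
have uA : A \in unitmx.
  apply: pdmx_unit => x x_neq0; rewrite /A qformD.
  by apply: (lt_le_trans (qform1_gt0 x_neq0)); rewrite lerDl; apply: psdmx_gram.
have AQ : A *m Q = Q by rewrite /A mulmxDl mul1mx -mulmxA YQ mulmx0 addr0.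
have AiQ : invmx A *m Q = Q by rewrite -{1}AQ mulKmx.
have QAi : Q *m invmx A = Q by rewrite -{1}hQ -herm_invmx // -hadjM AiQ hQ.
have AiQ_conj : invmx A - Q = hadj (1%:M - Q) *m invmx A *m (1%:M - Q).
  rewrite hadjB hadj1 hQ mulmxBl mul1mx QAi mulmxBr mulmx1 mulmxBl AiQ QQ.
  by rewrite subrr subr0.
rewrite -subr_ge0 -raddfB /= -mulmxBr AiQ_conj.
apply/mxtrace_gram_psd_ge0/psdmx_conj.
by apply: psdmx_inv => //; apply: psdmxD; [apply: psdmx1 | apply: psdmx_gram].
Qed.

(* N^-1 - (I + N)^-1 = (I + N)^-1 (N^-1 + I) (I + N)^-1 >= 0 for N := c G. *)
Lemma mxtrace_inv_scaled_shift_le q n (G : 'M[C]_n) (D : 'M[C]_(q, n)) (c : C) :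
  G \in unitmx -> hadj G = G -> psdmx (invmx G) -> 0 < c ->
  \tr (hadj D *m D *m invmx (1%:M + c *: G)) <=
    c^-1 * \tr (hadj D *m D *m invmx G).
Proof.
move=> uG hG piG c_gt0; set N := c *: G; set A := 1%:M + N.
have pG : psdmx G.
  by rewrite -[G]invmxK; apply: psdmx_inv; rewrite ?unitmx_inv ?herm_invmx.
have uN : N \in unitmx by rewrite /N unitmxZ ?unitfE ?gt_eqF.
have hN : hadj N = N by rewrite /N hadjZ hG geC0_conj // ltW.
have uA : A \in unitmx.
  apply: pdmx_unit => x x_neq0; rewrite /A qformD.
  apply: (lt_le_trans (qform1_gt0 x_neq0)).
  by rewrite lerDl /N qformZ mulr_ge0 // ltW.
have piN : psdmx (invmx N).
  by rewrite /N invmxZ // => x; rewrite qformZ mulr_ge0 // invr_ge0 ltW.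
have hiA : hadj (invmx A) = invmx A by rewrite herm_invmx // /A hadjD hadj1 hN.
have NiAi : invmx N *m invmx A = invmx A *m invmx N.
  by rewrite -!invmxM //; congr invmx; rewrite /A mulmxDl mulmxDr mul1mx mulmx1.
have NiAi_conj :
    invmx N - invmx A = hadj (invmx A) *m (invmx N + 1%:M) *m invmx A.
  have -> : invmx N + 1%:M = invmx N *m A by rewrite /A mulmxDr mulmx1 mulVmx.
  rewrite hiA -!mulmxA mulmxV // mulmx1 -NiAi.
  rewrite -{1}[invmx N]mulmx1 -(mulmxV uA) -{2}[invmx A]mul1mx -(mulVmx uN).
  by rewrite !mulmxA -mulmxBl -mulmxBr /A addrK mulmx1.
have : 0 <= \tr (hadj D *m D *m (invmx N - invmx A)).
  rewrite NiAi_conj; apply/mxtrace_gram_psd_ge0/psdmx_conj.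
  by apply: psdmxD => //; apply: psdmx1.
by rewrite mulmxBr raddfB /= subr_ge0 /N invmxZ // -scalemxAr mxtraceZ.
Qed.

End TraceBounds.

Section Subspaces.
Variable C : numClosedFieldType.

Lemma gram_rank_factor m l (S : 'M[C]_(m, l)) :
  exists St : 'M[C]_(m, \rank S), St *m hadj St = S *m hadj S.
Proof.
pose Q := schmidt (row_base S).
have QQ : Q *m hadj Q = 1%:M.
  exact/mulmx_hadj_unitary/schmidt_unitarymx/rank_leq_col.
have /submxP [X SXQ] : (S <= Q)%MS.
  by rewrite /Q (eqmx_schmidt_free (row_base_free S)) eq_row_base.
exists X; rewrite [in RHS]SXQ.
by rewrite hadjM mulmxA -[X *m Q *m _]mulmxA QQ mulmx1.
Qed.

Lemma isometry_into_kernel L M (T : 'M[C]_(L, M)) :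
  exists k (V : 'M[C]_(M, k)),
    [/\ hadj V *m V = 1%:M, T *m V = 0 & (M - L <= k)%N].
Proof.
pose K := kermx T^T; pose E := schmidt (row_base K).
have EE : E *m hadj E = 1%:M.
  exact/mulmx_hadj_unitary/schmidt_unitarymx/rank_leq_col.
have ET : E *m T^T = 0.
  apply/sub_kermxP.
  by rewrite /E (eqmx_schmidt_free (row_base_free K)) eq_row_base.
exists (\rank K), E^T; split.
- by rewrite hadj_trmx -trmx_mul EE trmx1.
- by rewrite -[T]trmxK -trmx_mul ET trmx0.
- by rewrite mxrank_ker leq_sub2l // rank_leq_col.
Qed.

End Subspaces.

Section MSE.
Variable C : numClosedFieldType.
Variables (M N L : nat) (Ct : 'M[C]_M) (Cr : 'M[C]_N).

Lemma mse_gramE (Kq : 'M[C]_L) (Kr : 'M[C]_N) (S : 'M[C]_(M, L))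
    (W : 'M[C]_(L * N)) :
  invmx (Kq *t Kr) = hadj W *m W ->
  mse Ct Cr Kq Kr S = \tr (hadj (Ct *t Cr) *m (Ct *t Cr) *m
     invmx (1%:M + hadj (W *m ((S^T *m Ct) *t Cr)) *m (W *m ((S^T *m Ct) *t Cr)))).
Proof.
move=> KW; rewrite /mse /= KW [in RHS]hadj_tensmx [in RHS]tensmx_mul.
by rewrite [hadj (W *m _)]hadjM !mulmxA.
Qed.

Lemma mse_ge_kernel_proj (Kq : 'M[C]_L) (Kr : 'M[C]_N) (S : 'M[C]_(M, L))
    k (V : 'M[C]_(M, k)) :
  herm_pd Kq -> herm_pd Kr -> hadj V *m V = 1%:M -> S^T *m Ct *m V = 0 ->
  \tr (hadj Ct *m Ct *m (V *m hadj V)) * \tr (hadj Cr *m Cr) <=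
  mse Ct Cr Kq Kr S.
Proof.
move=> pdKq pdKr VV SV; have [W _ KW] := herm_pd_tens_inv_gram pdKq pdKr.
rewrite (mse_gramE _ KW); set P := V *m hadj V.
have PP : P *m P = P by rewrite /P mulmxA -[V *m _ *m V]mulmxA VV mulmx1.
have hP : hadj P = P by rewrite /P hadjM hadjK.
have <- : \tr (hadj (Ct *t Cr) *m (Ct *t Cr) *m (P *t 1%:M)) =
          \tr (hadj Ct *m Ct *m P) * \tr (hadj Cr *m Cr).
  by rewrite hadj_tensmx !tensmx_mul mulmx1 mxtrace_tens.
apply: mxtrace_proj_le_inv_gram_shift.
- by rewrite hadj_tensmx hP hadj1.
- by rewrite tensmx_mul PP mulmx1.
- by rewrite -mulmxA tensmx_mul /P mulmxA SV mul0mx tens0mx mulmx0.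
Qed.

Lemma hadj_pid_mx_mul : (M <= L)%N ->
  hadj (pid_mx M : 'M[C]_(L, M)) *m (pid_mx M : 'M[C]_(L, M)) = 1%:M.
Proof. by move=> hML; rewrite /hadj map_pid_mx tr_pid_mx pid_mx_id // pid_mx_1. Qed.

Lemma mse_scaled_pilot_le (Kq : 'M[C]_L) (Kr : 'M[C]_N) :
  herm_pd Kq -> herm_pd Kr -> Ct \in unitmx -> Cr \in unitmx -> (M <= L)%N ->
  exists2 beta : C, 0 <= beta & forall c : C, 0 < c ->
    mse Ct Cr Kq Kr (c *: (pid_mx M *m invmx Ct)^T) <= (c * c)^-1 * beta.
Proof.
move=> pdKq pdKr uCt uCr hML; have [W uW KW] := herm_pd_tens_inv_gram pdKq pdKr.
set E : 'M[C]_(L, M) := pid_mx M; set Y := W *m (E *t Cr); set G := hadj Y *m Y.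
have pdG : pdmx G.
  move=> x x_neq0; rewrite /G -[hadj Y]mulmx1 qform_conj; apply: qform1_gt0.
  apply: contra x_neq0 => /eqP Yx.
  have YinvY : ((hadj E *t invmx Cr) *m invmx W) *m Y = 1%:M.
    rewrite /Y mulmxA -[_ *m invmx W *m W]mulmxA mulVmx // mulmx1.
    by rewrite tensmx_mul hadj_pid_mx_mul // mulVmx // tensmx11.
  by rewrite -[x]mul1mx -YinvY -[_ *m Y *m x]mulmxA Yx mulmx0.
have uG : G \in unitmx by exact: pdmx_unit.
have hG : hadj G = G by rewrite /G hadjM hadjK.
exists (\tr (hadj (Ct *t Cr) *m (Ct *t Cr) *m invmx G)).
  by apply/mxtrace_gram_psd_ge0/psdmx_inv => //; apply: psdmx_gram.
move=> c c_gt0; rewrite (mse_gramE _ KW).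
have -> : ((c *: (E *m invmx Ct)^T)^T *m Ct) *t Cr = c *: (E *t Cr).
  by rewrite linearZ /= trmxK -scalemxAl mulmxKV // tensmxZl.
rewrite -scalemxAr hadjZ -scalemxAl -scalemxAr scalerA (geC0_conj (ltW c_gt0)).
apply: mxtrace_inv_scaled_shift_le => //; last exact: mulr_gt0.
by apply: psdmx_inv => //; apply: psdmx_gram.
Qed.

Lemma mse_scalarE L' (Kr : 'M[C]_N) (q : C) (S : 'M[C]_(M, L')) :
  q != 0 -> Kr \in unitmx ->
  mse Ct Cr (q%:M) Kr S = \tr (hadj (Ct *t Cr) *m (Ct *t Cr) *m
     invmx (1%:M + (q^-1 *: (hadj Ct *m (S *m hadj S)^T *m Ct)) *t
                     (hadj Cr *m invmx Kr *m Cr))).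
Proof.
move=> q_neq0 uKr.
have uq : (q%:M : 'M[C]_L') \in unitmx by rewrite unitmxE det_scalar unitrX // unitfE.
have [_ Kinv] := tensmx_inv uq uKr.
rewrite /mse Kinv invmx_scalar hadj_tensmx !tensmx_mul hadj_tensmx tensmx_mul.
by rewrite mul_mx_scalar -scalemxAl hadjM hadj_trmx trmx_mul !mulmxA.
Qed.

Lemma mse_scalar_gram_eq L1 L2 (Kr : 'M[C]_N) (q : C)
    (S1 : 'M[C]_(M, L1)) (S2 : 'M[C]_(M, L2)) :
  q != 0 -> Kr \in unitmx -> S1 *m hadj S1 = S2 *m hadj S2 ->
  mse Ct Cr (q%:M) Kr S1 = mse Ct Cr (q%:M) Kr S2.
Proof. by move=> q_neq0 uKr S12; rewrite !mse_scalarE // S12. Qed.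

End MSE.

Section TotalMSE.
Variable C : numClosedFieldType.
Variables (M N1 N2 L : nat) (Ct : 'M[C]_M) (Cr1 : 'M[C]_N1) (Cr2 : 'M[C]_N2).
Variables (Kr1 : 'M[C]_N1) (Kr2 : 'M[C]_N2).
Hypotheses (pdKr1 : herm_pd Kr1) (pdKr2 : herm_pd Kr2).

Lemma total_mse_vanishes (Kq1 Kq2 : 'M[C]_L) :
  Ct \in unitmx -> Cr1 \in unitmx -> Cr2 \in unitmx ->
  herm_pd Kq1 -> herm_pd Kq2 -> (M <= L)%N ->
  forall eps : C, 0 < eps ->
  exists S : 'M[C]_(M, L), total_mse Ct Cr1 Cr2 Kq1 Kq2 Kr1 Kr2 S < eps.
Proof.
move=> uCt uCr1 uCr2 pdKq1 pdKq2 hML eps eps_gt0.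
have [b1 b1_ge0 mse1_le] := mse_scaled_pilot_le pdKq1 pdKr1 uCt uCr1 hML.
have [b2 b2_ge0 mse2_le] := mse_scaled_pilot_le pdKq2 pdKr2 uCt uCr2 hML.
set b := b1 + b2; set c := b / eps + 1.
have b_ge0 : 0 <= b by rewrite addr_ge0.
have c_ge1 : 1 <= c by rewrite lerDr divr_ge0 // ltW.
have c_gt0 : 0 < c by apply: lt_le_trans c_ge1.
exists (c *: (pid_mx M *m invmx Ct)^T).
apply: (le_lt_trans (lerD (mse1_le c c_gt0) (mse2_le c c_gt0))).
rewrite -mulrDr -/b mulrC ltr_pdivrMr ?mulr_gt0 //.
have eps_c : eps * c = b + eps by rewrite /c mulrDr mulr1 mulrC divfK // gt_eqF.
apply: (lt_le_trans (y := eps * c)); first by rewrite eps_c ltrDl.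
by rewrite mulrA ler_peMr // mulr_ge0 // ltW.
Qed.

Lemma total_mse_ge_tail_eigvals (Kq1 Kq2 : 'M[C]_L) (Zt : 'M[C]_M)
    (Zr1 : 'M[C]_N1) (Zr2 : 'M[C]_N2) st sr1 sr2 (S : 'M[C]_(M, L)) :
  Ct \in unitmx -> Zt = Ct *m hadj Ct ->
  Zr1 = Cr1 *m hadj Cr1 -> Zr2 = Cr2 *m hadj Cr2 ->
  herm_pd Kq1 -> herm_pd Kq2 -> (L < M)%N ->
  eigvals_of Zt st -> (forall i j : 'I_M, (i <= j)%N -> st j <= st i) ->
  eigvals_of Zr1 sr1 -> eigvals_of Zr2 sr2 ->
  (\sum_(m < M | (L <= m)%N) st m) * (\sum_(n < N1) sr1 n + \sum_(n < N2) sr2 n)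
    <= total_mse Ct Cr1 Cr2 Kq1 Kq2 Kr1 Kr2 S.
Proof.
move=> uCt eZt eZr1 eZr2 pdKq1 pdKq2 hLM st_eig st_dec sr1_eig sr2_eig.
have [k [V [VV SV hk]]] := isometry_into_kernel (S^T *m Ct).
have mse1_ge := mse_ge_kernel_proj Cr1 pdKq1 pdKr1 VV SV.
have mse2_ge := mse_ge_kernel_proj Cr2 pdKq2 pdKr2 VV SV.
set H := hadj Ct *m Ct.
have H_eig : eigvals_of H st.
  rewrite /eigvals_of -st_eig eZt.
  have -> : H = invmx Ct *m (Ct *m hadj Ct) *m Ct by rewrite mulmxA mulVmx ?mul1mx.
  by rewrite char_poly_conj // mulVmx.
have hH : hadj H = H by rewrite /H hadjM hadjK.
have ky_fan := ky_fan_tail hH (psdmx_gram Ct) H_eig st_dec VV hLM hk.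
have tr_Zr1 : \tr (hadj Cr1 *m Cr1) = \sum_(n < N1) sr1 n.
  by rewrite mxtrace_mulC -eZr1 (mxtrace_eigvals sr1_eig).
have tr_Zr2 : \tr (hadj Cr2 *m Cr2) = \sum_(n < N2) sr2 n.
  by rewrite mxtrace_mulC -eZr2 (mxtrace_eigvals sr2_eig).
have tr_Zr_ge0 : 0 <= \tr (hadj Cr1 *m Cr1) + \tr (hadj Cr2 *m Cr2).
  by rewrite addr_ge0 // -[hadj _ *m _]mulmx1 mxtrace_gram_psd_ge0 //; apply: psdmx1.
rewrite /total_mse -tr_Zr1 -tr_Zr2.
by apply: le_trans (ler_wpM2r tr_Zr_ge0 ky_fan) _; rewrite mulrDr lerD.
Qed.

Lemma total_mse_scalar_gram_eq L' (q1 q2 : C)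
    (S : 'M[C]_(M, L)) (S' : 'M[C]_(M, L')) :
  q1 != 0 -> q2 != 0 -> S' *m hadj S' = S *m hadj S ->
  total_mse Ct Cr1 Cr2 q1%:M q2%:M Kr1 Kr2 S' =
  total_mse Ct Cr1 Cr2 q1%:M q2%:M Kr1 Kr2 S.
Proof.
move=> q1_neq0 q2_neq0 SS'.
by rewrite /total_mse !(mse_scalar_gram_eq _ _ _ _ SS') // herm_pd_unit.
Qed.

End TotalMSE.

Unset Implicit Arguments.
Set Strict Implicit.

Theorem lemma3 (R : rcfType) (M N1 N2 L : nat)
  (Ct : 'M[complex R]_M) (Cr1 : 'M[complex R]_N1) (Cr2 : 'M[complex R]_N2)
  (Zt : 'M[complex R]_M) (Zr1 : 'M[complex R]_N1) (Zr2 : 'M[complex R]_N2)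
  (Kr1 : 'M[complex R]_N1) (Kr2 : 'M[complex R]_N2)
  (hCt : Ct \in unitmx) (hCr1 : Cr1 \in unitmx) (hCr2 : Cr2 \in unitmx)
  (hZt : Zt = Ct *m hadj Ct) (hZr1 : Zr1 = Cr1 *m hadj Cr1)
  (hZr2 : Zr2 = Cr2 *m hadj Cr2)
  (pdZt : herm_pd Zt) (pdZr1 : herm_pd Zr1) (pdZr2 : herm_pd Zr2)
  (pdKr1 : herm_pd Kr1) (pdKr2 : herm_pd Kr2)
  (shK1 : share_eigvecs Kr1 Zr1) (shK2 : share_eigvecs Kr2 Zr2) :
  (* (i) *)
  (forall Kq1 Kq2 : 'M[complex R]_L, herm_pd Kq1 -> herm_pd Kq2 ->
     (M <= L)%N ->
     forall eps : complex R, 0 < eps ->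
     exists S : 'M[complex R]_(M, L),
       total_mse Ct Cr1 Cr2 Kq1 Kq2 Kr1 Kr2 S < eps)
  /\
  (* (ii) *)
  (forall Kq1 Kq2 : 'M[complex R]_L, herm_pd Kq1 -> herm_pd Kq2 ->
     (L < M)%N ->
     forall (st : 'I_M -> complex R) (sr1 : 'I_N1 -> complex R)
            (sr2 : 'I_N2 -> complex R),
     eigvals_of Zt st ->
     (forall i j : 'I_M, (i <= j)%N -> st j <= st i) ->
     eigvals_of Zr1 sr1 -> eigvals_of Zr2 sr2 ->
     forall S : 'M[complex R]_(M, L),
       (\sum_(m < M | (L <= m)%N) st m) *
         (\sum_(n < N1) sr1 n + \sum_(n < N2) sr2 n)
       <= total_mse Ct Cr1 Cr2 Kq1 Kq2 Kr1 Kr2 S)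
  /\
  (* (iii) *)
  (forall q1 q2 tau : complex R, 0 < q1 -> 0 < q2 -> 0 < tau ->
     forall Sopt : 'M[complex R]_(M, L),
       \tr (Sopt *m hadj Sopt) <= tau ->
       (forall S : 'M[complex R]_(M, L), \tr (S *m hadj S) <= tau ->
          total_mse Ct Cr1 Cr2 (q1%:M) (q2%:M) Kr1 Kr2 Sopt
          <= total_mse Ct Cr1 Cr2 (q1%:M) (q2%:M) Kr1 Kr2 S) ->
       exists St : 'M[complex R]_(M, \rank Sopt),
         \tr (St *m hadj St) = \tr (Sopt *m hadj Sopt) /\
         total_mse Ct Cr1 Cr2 (q1%:M) (q2%:M) Kr1 Kr2 St
         = total_mse Ct Cr1 Cr2 (q1%:M) (q2%:M) Kr1 Kr2 Sopt).
Proof.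
split; [|split].
- move=> Kq1 Kq2 pdKq1 pdKq2 hML.
  exact: total_mse_vanishes.
- move=> Kq1 Kq2 pdKq1 pdKq2 hLM st sr1 sr2 st_eig st_dec sr1_eig sr2_eig S.
  exact: total_mse_ge_tail_eigvals hZr1 hZr2 pdKq1 pdKq2 hLM st_eig st_dec
    sr1_eig sr2_eig.
- move=> q1 q2 tau q1_gt0 q2_gt0 _ Sopt _ _.
  have [St StSt] := gram_rank_factor Sopt.
  exists St; split; first by rewrite StSt.
  by apply: total_mse_scalar_gram_eq; rewrite ?gt_eqF.
Qed.
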